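(* Let $f_0,f_1\in \mathrm{PL}_0(\mathbf{I})$ satisfy $[f_1^{f_0},f_0f_1^{-1}]=1$ and $[f_0f_1^{-1},f_1^{f_0^2}]=1$. If $A$ is an orbital of $f_0$ and $B$ is an orbital of $f_1$ with $A\cap B\neq\emptyset$, then either $A\subseteq B$ or $B\subseteq A$.
   Context: $\mathrm{PL}_0(\mathbf{I})$ is the group of orientation-preserving piecewise-linear homeomorphisms of $[0,1]$ with finitely many points of non-differentiability. Functions act on the right: $tf=f(t)$, $fg=g\circ f$, $a^b=b^{-1}ab$, $[a,b]=aba^{-1}b^{-1}$. The orbitals of $f$ are the connected components (open intervals) of $\operatorname{Supp}(f)=\{x: xf\ne x\}$. *)

From Stdlib Require Import Reals List.
Open Scope R_scope.

Fixpoint affine_pieces (f : R -> R) (l : list R) : Prop :=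
  match l with
  | a :: ((b :: _) as t) =>
      a < b /\ (exists m c : R, forall x, a <= x <= b -> f x = m * x + c)
      /\ affine_pieces f t
  | _ => True
  end.

(* f (restricted to [0,1]) is an element of PL_0(I): an orientation-preserving
   homeomorphism of [0,1] (fixes 0 and 1, strictly increasing, continuous --
   continuity follows from being piecewise affine on closed pieces) which is
   piecewise linear with finitely many breakpoints. *)
Definition PL0 (f : R -> R) : Prop :=
  f 0 = 0 /\ f 1 = 1 /\
  (forall x y, 0 <= x -> x < y -> y <= 1 -> f x < f y) /\
  exists l : list R, affine_pieces f (0 :: l) /\ last (0 :: l) 0 = 1.

Definition is_inv (f g : R -> R) : Prop :=
  forall x, 0 <= x <= 1 -> g (f x) = x /\ f (g x) = x.

(* Right actions: t(fg) = g(f(t)), so the product fg is "first f then g". *)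
Definition pmul (f g : R -> R) : R -> R := fun x => g (f x).

Definition pconj (a b binv : R -> R) : R -> R := pmul (pmul binv a) b.

Definition pcomm (a ainv b binv : R -> R) : R -> R :=
  pmul (pmul (pmul a b) ainv) binv.

Definition is_id (h : R -> R) : Prop := forall x, 0 <= x <= 1 -> h x = x.

Definition supp (f : R -> R) (x : R) : Prop := 0 <= x <= 1 /\ f x <> x.

(* A is an orbital of f: a connected component of Supp(f), i.e. an open
   interval (a,b) contained in Supp(f) whose endpoints are not in Supp(f). *)
Definition orbital (f : R -> R) (A : R -> Prop) : Prop :=
  exists a b : R, a < b /\ 0 <= a /\ b <= 1 /\
    (forall x, A x <-> a < x < b) /\
    (forall x, a < x < b -> supp f x) /\
    ~ supp f a /\ ~ supp f b.

(* An element h of PL_0(I) commuting with g either fixes an orbital of g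
   pointwise or has no fixed point in it: its fixed points and its moved points
   in the orbital are both invariant under g, so both cluster at the left end
   of the orbital, where h is affine.  Hence intersecting orbitals of commuting
   elements coincide.  The relators say that g = f0 f1^-1 commutes with f1^f0
   and with f1^(f0^2).  If an orbital A of f0 and an orbital B of f1 overlap
   without being nested, an end e of A lies in B and is fixed by f0; the orbital
   of g through e is then both f0(B) and f0^2(B), so f0 fixes the ends of B, one
   of which lies inside A. *)

From Stdlib Require Import Reals Lra Classical List.
Open Scope R_scope.

Definition incr01 (f : R -> R) : Prop :=
  forall x y, 0 <= x -> x < y -> y <= 1 -> f x < f y.

Definition affine_on (f : R -> R) (u v : R) : Prop :=
  exists m c, forall x, u <= x <= v -> f x = m * x + c.

Definition affine_right (f : R -> R) (p : R) : Prop :=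
  exists e, 0 < e /\ p + e <= 1 /\ affine_on f p (p + e).

Definition affine_left (f : R -> R) (p : R) : Prop :=
  exists e, 0 < e /\ 0 <= p - e /\ affine_on f (p - e) p.

(* Germ-wise form of [PL0]: affine on a one-sided neighbourhood of each point. *)
Record pl_homeo (f : R -> R) : Prop := {
  pl_fix0 : f 0 = 0;
  pl_fix1 : f 1 = 1;
  pl_incr : incr01 f;
  pl_right : forall p, 0 <= p < 1 -> affine_right f p;
  pl_left : forall p, 0 < p <= 1 -> affine_left f p }.
Arguments pl_fix0 {f}. Arguments pl_fix1 {f}. Arguments pl_incr {f}.
Arguments pl_right {f}. Arguments pl_left {f}.

Definition inverse01 (f fi : R -> R) : Prop :=
  forall x, 0 <= x <= 1 ->
    0 <= f x <= 1 /\ 0 <= fi x <= 1 /\ fi (f x) = x /\ f (fi x) = x.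

Definition commute01 (g h : R -> R) : Prop :=
  forall x, 0 <= x <= 1 -> g (h x) = h (g x).

Record orbital_ends (f : R -> R) (c0 c1 : R) : Prop := {
  oe_lt : c0 < c1;
  oe_ge0 : 0 <= c0;
  oe_le1 : c1 <= 1;
  oe_fix0 : f c0 = c0;
  oe_fix1 : f c1 = c1;
  oe_moves : forall x, c0 < x < c1 -> f x <> x }.
Arguments oe_lt {f c0 c1}. Arguments oe_ge0 {f c0 c1}. Arguments oe_le1 {f c0 c1}.
Arguments oe_fix0 {f c0 c1}. Arguments oe_fix1 {f c0 c1}. Arguments oe_moves {f c0 c1}.

(* Conjugation by [x |-> 1 - x]: it exchanges left and right ends of orbitals. *)
Definition flip (f : R -> R) : R -> R := fun x => 1 - f (1 - x).

Lemma incr01_le f x y : incr01 f -> 0 <= x -> x <= y -> y <= 1 -> f x <= f y.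
Proof.
  intros Hf Hx Hxy Hy. destruct (Req_dec x y) as [->|Hne]; [lra|].
  left; apply Hf; lra.
Qed.

Lemma incr01_inj f x y : incr01 f -> 0 <= x <= 1 -> 0 <= y <= 1 -> f x = f y -> x = y.
Proof.
  intros Hf Hx Hy E. destruct (Rtotal_order x y) as [H|[H|H]]; auto.
  - assert (f x < f y) by (apply Hf; lra); lra.
  - assert (f y < f x) by (apply Hf; lra); lra.
Qed.

Lemma pl_homeo_range f x : pl_homeo f -> 0 <= x <= 1 -> 0 <= f x <= 1.
Proof.
  intros Hf Hx. rewrite <- (pl_fix0 Hf), <- (pl_fix1 Hf).
  split; apply incr01_le; auto using pl_incr; lra.
Qed.

(** * PL homeomorphisms *)

Lemma affine_on_sub f u v u' v' : affine_on f u v -> u <= u' -> v' <= v -> affine_on f u' v'.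
Proof. intros (m & c & Hf) Hu Hv. exists m, c. intros x Hx. apply Hf; lra. Qed.

Lemma affine_on_comp a b u v u' v' : affine_on a u v -> affine_on b u' v' ->
  (forall x, u <= x <= v -> u' <= a x <= v') -> affine_on (pmul a b) u v.
Proof.
  intros (m & c & Ha) (m' & c' & Hb) Hab. exists (m' * m), (m' * c + c').
  intros x Hx. unfold pmul. rewrite (Hb (a x) (Hab x Hx)), (Ha x Hx). ring.
Qed.

Lemma affine_on_inv f fi u v : affine_on f u v -> u < v -> f u < f v ->
  (forall y, f u <= y <= f v -> u <= fi y <= v /\ f (fi y) = y) ->
  affine_on fi (f u) (f v).
Proof.
  intros (m & c & Hf) Huv Hlt Hfi.
  assert (Hm : 0 < m) by (rewrite (Hf u), (Hf v) in Hlt by lra; nra).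
  exists (/ m), (- c / m). intros y Hy. destruct (Hfi y Hy) as [Hr Hy'].
  rewrite (Hf (fi y) Hr) in Hy'. rewrite <- Hy' at 2. field. lra.
Qed.

Lemma affine_on_cont f u v p d : affine_on f u v -> u <= p <= v -> 0 < d ->
  exists eta, 0 < eta /\
    forall x, u <= x <= v -> p - eta <= x <= p + eta -> f p - d < f x < f p + d.
Proof.
  intros (m & c & Hf) Hp Hd. pose proof (Rabs_pos m) as Hm.
  set (eta := d / (Rabs m + 1)).
  assert (Heta : eta * (Rabs m + 1) = d) by (unfold eta; field; lra).
  assert (Hpos : 0 < eta) by (unfold eta; apply Rdiv_lt_0_compat; lra).
  exists eta. split; [exact Hpos|]. intros x Hx Hxp.
  assert (Hk : Rabs (x - p) <= eta) by (apply Rabs_le; lra).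
  assert (Hb : Rabs (m * (x - p)) < d).
  { rewrite Rabs_mult. pose proof (Rmult_le_compat_l _ _ _ Hm Hk). nra. }
  apply Rabs_def2 in Hb. rewrite (Hf x Hx), (Hf p Hp). lra.
Qed.

Lemma affine_right_cont f p d : affine_right f p -> 0 < d ->
  exists eta, 0 < eta /\ p + eta <= 1 /\
    forall x, p <= x <= p + eta -> f p - d < f x < f p + d.
Proof.
  intros (e & He & Hle & Ha) Hd.
  destruct (affine_on_cont f p (p + e) p d Ha ltac:(lra) Hd) as (eta & Heta & Hc).
  exists (Rmin e eta). pose proof (Rmin_l e eta). pose proof (Rmin_r e eta).
  split; [apply Rmin_glb_lt; lra|]. split; [lra|].
  intros x Hx. apply Hc; lra.
Qed.

Lemma affine_right_comp a b p : pl_homeo a -> affine_right b (a p) -> 0 <= p < 1 ->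
  affine_right (pmul a b) p.
Proof.
  intros Ha (e2 & He2 & Hle2 & Hb) Hp.
  destruct (pl_right Ha p Hp) as (e1 & He1 & Hle1 & Ha1).
  destruct (affine_on_cont a p (p + e1) p e2 Ha1 ltac:(lra) He2) as (eta & Heta & Hc).
  pose proof (Rmin_l e1 eta). pose proof (Rmin_r e1 eta).
  exists (Rmin e1 eta). split; [apply Rmin_glb_lt; lra|]. split; [lra|].
  apply (affine_on_comp a b p (p + Rmin e1 eta) (a p) (a p + e2)); [apply (affine_on_sub _ _ _ _ _ Ha1); lra | exact Hb|].
  intros x Hx. split; [apply incr01_le; auto using pl_incr; lra|].
  assert (a x < a p + e2) by (apply Hc; lra). lra.
Qed.

Lemma affine_left_comp a b p : pl_homeo a -> affine_left b (a p) -> 0 < p <= 1 ->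
  affine_left (pmul a b) p.
Proof.
  intros Ha (e2 & He2 & Hle2 & Hb) Hp.
  destruct (pl_left Ha p Hp) as (e1 & He1 & Hle1 & Ha1).
  destruct (affine_on_cont a (p - e1) p p e2 Ha1 ltac:(lra) He2) as (eta & Heta & Hc).
  pose proof (Rmin_l e1 eta). pose proof (Rmin_r e1 eta).
  exists (Rmin e1 eta). split; [apply Rmin_glb_lt; lra|]. split; [lra|].
  apply (affine_on_comp a b (p - Rmin e1 eta) p (a p - e2) (a p)); [apply (affine_on_sub _ _ _ _ _ Ha1); lra | exact Hb|].
  intros x Hx. split; [|apply incr01_le; auto using pl_incr; lra].
  assert (a p - e2 < a x) by (apply Hc; lra). lra.
Qed.

Lemma pl_homeo_comp a b : pl_homeo a -> pl_homeo b -> pl_homeo (pmul a b).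
Proof.
  intros Ha Hb. unfold pmul. split.
  - rewrite (pl_fix0 Ha). apply (pl_fix0 Hb).
  - rewrite (pl_fix1 Ha). apply (pl_fix1 Hb).
  - intros x y Hx Hxy Hy. apply (pl_incr Hb);
      [apply pl_homeo_range; auto; lra | apply (pl_incr Ha); lra | apply pl_homeo_range; auto; lra].
  - intros p Hp. apply affine_right_comp; auto. apply (pl_right Hb). split.
    + apply pl_homeo_range; auto; lra.
    + rewrite <- (pl_fix1 Ha). apply (pl_incr Ha); lra.
  - intros p Hp. apply affine_left_comp; auto. apply (pl_left Hb). split.
    + rewrite <- (pl_fix0 Ha). apply (pl_incr Ha); lra.
    + apply pl_homeo_range; auto; lra.
Qed.

Lemma inverse01_sym f fi : inverse01 f fi -> inverse01 fi f.
Proof. intros H x Hx. destruct (H x Hx) as (A & B & C & D). auto. Qed.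

Lemma inverse01_comp a ai b bi : inverse01 a ai -> inverse01 b bi ->
  inverse01 (pmul a b) (pmul bi ai).
Proof.
  intros Ha Hb x Hx. unfold pmul.
  destruct (Ha x Hx) as (A1 & A2 & A3 & A4). destruct (Hb x Hx) as (B1 & B2 & B3 & B4).
  destruct (Ha (bi x) B2) as (C1 & C2 & C3 & C4). destruct (Hb (a x) A1) as (D1 & D2 & D3 & D4).
  rewrite D3, C4. auto.
Qed.

Lemma incr01_inverse f fi : incr01 f -> inverse01 f fi -> incr01 fi.
Proof.
  intros Hf Hi x y Hx Hxy Hy.
  destruct (Hi x ltac:(lra)) as (_ & X & _ & Ex). destruct (Hi y ltac:(lra)) as (_ & Y & _ & Ey).
  destruct (Rlt_le_dec (fi x) (fi y)) as [|Hle]; auto.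
  assert (f (fi y) <= f (fi x)) by (apply incr01_le; auto; lra). lra.
Qed.

Lemma pl_homeo_inverse f fi : pl_homeo f -> inverse01 f fi -> pl_homeo fi.
Proof.
  intros Hf Hi. pose proof (incr01_inverse f fi (pl_incr Hf) Hi) as Hinc.
  assert (Hinv : forall x, 0 <= x <= 1 -> fi (f x) = x) by (apply Hi).
  assert (Hfix : forall x, f x = x -> 0 <= x <= 1 -> fi x = x).
  { intros x Ex Hx. rewrite <- Ex at 1. auto. }
  assert (Hpiece : forall u v, 0 <= u < v -> v <= 1 -> affine_on f u v -> affine_on fi (f u) (f v)).
  { intros u v Huv Hv Ha. apply affine_on_inv; [exact Ha | lra | apply (pl_incr Hf); lra|].
    intros y Hy. destruct (Hi y) as (_ & Hr & _ & Hy'); [split|].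
    - pose proof (pl_homeo_range f u Hf ltac:(lra)); lra.
    - pose proof (pl_homeo_range f v Hf ltac:(lra)); lra.
    - split; [|exact Hy']. rewrite <- (Hinv u), <- (Hinv v) by lra.
      split; apply incr01_le; auto; pose proof (pl_homeo_range f u Hf ltac:(lra));
        pose proof (pl_homeo_range f v Hf ltac:(lra)); lra. }
  split; [| | exact Hinc | |].
  - apply Hfix; [apply (pl_fix0 Hf) | lra].
  - apply Hfix; [apply (pl_fix1 Hf) | lra].
  - intros p Hp. destruct (Hi p ltac:(lra)) as (_ & Hq & _ & Ep).
    assert (Hq1 : fi p < 1) by (rewrite <- (Hfix 1 (pl_fix1 Hf)) by lra; apply Hinc; lra).
    destruct (pl_right Hf (fi p) ltac:(lra)) as (e & He & Hle & Ha).
    pose proof (pl_incr Hf (fi p) (fi p + e) ltac:(lra) ltac:(lra) Hle).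
    pose proof (pl_homeo_range f (fi p + e) Hf ltac:(lra)).
    exists (f (fi p + e) - p). split; [lra|]. split; [lra|].
    replace (p + (f (fi p + e) - p)) with (f (fi p + e)) by ring.
    rewrite <- Ep at 1. apply Hpiece; auto; lra.
  - intros p Hp. destruct (Hi p ltac:(lra)) as (_ & Hq & _ & Ep).
    assert (Hq0 : 0 < fi p) by (rewrite <- (Hfix 0 (pl_fix0 Hf)) by lra; apply Hinc; lra).
    destruct (pl_left Hf (fi p) ltac:(lra)) as (e & He & Hle & Ha).
    pose proof (pl_incr Hf (fi p - e) (fi p) ltac:(lra) ltac:(lra) ltac:(lra)).
    pose proof (pl_homeo_range f (fi p - e) Hf ltac:(lra)).
    exists (p - f (fi p - e)). split; [lra|]. split; [lra|].
    replace (p - (p - f (fi p - e))) with (f (fi p - e)) by ring.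
    rewrite <- Ep at 2. apply Hpiece; auto; lra.
Qed.

Lemma affine_pieces_last_ge f t a d : affine_pieces f (a :: t) -> a <= last (a :: t) d.
Proof.
  revert a. induction t as [|b t IH]; intros a H; simpl; [lra|].
  destruct H as (Hab & _ & H). specialize (IH b H). simpl in IH. destruct t; lra.
Qed.

Lemma affine_pieces_right f t a d : affine_pieces f (a :: t) ->
  forall p, a <= p < last (a :: t) d ->
  exists e, 0 < e /\ p + e <= last (a :: t) d /\ affine_on f p (p + e).
Proof.
  revert a. induction t as [|b t IH]; intros a H p Hp; [simpl in Hp; lra|].
  destruct H as (Hab & Ha & H). change (last (a :: b :: t) d) with (last (b :: t) d) in *.
  destruct (Rlt_le_dec p b).
  - pose proof (affine_pieces_last_ge f t b d H).
    exists (b - p). split; [lra|]. split; [lra|].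
    apply (affine_on_sub _ _ _ _ _ Ha); lra.
  - apply IH; auto; lra.
Qed.

Lemma affine_pieces_left f t a d : affine_pieces f (a :: t) ->
  forall p, a < p <= last (a :: t) d ->
  exists e, 0 < e /\ a <= p - e /\ affine_on f (p - e) p.
Proof.
  revert a. induction t as [|b t IH]; intros a H p Hp; [simpl in Hp; lra|].
  destruct H as (Hab & Ha & H). change (last (a :: b :: t) d) with (last (b :: t) d) in *.
  destruct (Rle_lt_dec p b).
  - exists (p - a). split; [lra|]. split; [lra|].
    apply (affine_on_sub _ _ _ _ _ Ha); lra.
  - destruct (IH b H p ltac:(lra)) as (e & He & Hb & Hr). exists e. split; [lra|]. split; [lra|auto].
Qed.

Lemma affine_pieces_onto f t a d : incr01 f -> affine_pieces f (a :: t) ->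
  0 <= a -> last (a :: t) d <= 1 ->
  forall y, f a <= y <= f (last (a :: t) d) -> exists x, a <= x <= last (a :: t) d /\ f x = y.
Proof.
  intros Hinc. revert a. induction t as [|b t IH]; intros a H Ha Hl y Hy.
  - exists a. simpl in *. split; lra.
  - destruct H as (Hab & (m & c & Hf) & H). change (last (a :: b :: t) d) with (last (b :: t) d) in *.
    pose proof (affine_pieces_last_ge f t b d H).
    destruct (Rle_lt_dec y (f b)).
    + assert (Hlt : f a < f b) by (apply Hinc; lra).
      rewrite (Hf a), (Hf b) in * by lra.
      assert (Hm : 0 < m) by nra.
      assert (Hy' : m * ((y - c) / m) + c = y) by (field; lra).
      assert (a <= (y - c) / m <= b) by nra.
      exists ((y - c) / m). rewrite Hf by lra. split; [lra | exact Hy'].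
    + destruct (IH b H ltac:(lra) Hl y ltac:(lra)) as (x & Hx & E). exists x. split; [lra|auto].
Qed.

Lemma PL0_pl_homeo f : PL0 f -> pl_homeo f.
Proof.
  intros (H0 & H1 & Hinc & l & Hp & Hl). split; auto.
  - intros p Hpp. destruct (affine_pieces_right f l 0 0 Hp p ltac:(lra)) as (e & He & Hle & Ha).
    exists e. split; [lra|]. split; [lra|auto].
  - intros p Hpp. destruct (affine_pieces_left f l 0 0 Hp p ltac:(lra)) as (e & He & Hle & Ha).
    exists e. auto.
Qed.

Lemma is_inv_inverse01 f g : PL0 f -> is_inv f g -> inverse01 f g.
Proof.
  intros HP Hi x Hx. pose proof (PL0_pl_homeo f HP) as Hf.
  destruct HP as (H0 & H1 & Hinc & l & Hp & Hl).
  destruct (affine_pieces_onto f l 0 0 Hinc Hp ltac:(lra) ltac:(lra) x) as (z & Hz & <-).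
  { rewrite Hl, H0, H1. lra. }
  rewrite Hl in Hz. destruct (Hi z Hz) as [-> _].
  split; [apply pl_homeo_range; auto|]. split; [lra|].
  split; [exact (proj1 (Hi (f z) Hx)) | reflexivity].
Qed.

Lemma pl_homeo_flip f : pl_homeo f -> pl_homeo (flip f).
Proof.
  intros Hf. unfold flip. split.
  - replace (1 - 0) with 1 by ring. rewrite (pl_fix1 Hf). ring.
  - replace (1 - 1) with 0 by ring. rewrite (pl_fix0 Hf). ring.
  - intros x y Hx Hxy Hy. assert (f (1 - y) < f (1 - x)) by (apply (pl_incr Hf); lra). lra.
  - intros p Hp. destruct (pl_left Hf (1 - p) ltac:(lra)) as (e & He & Hle & m & c & Ha).
    exists e. split; [lra|]. split; [lra|]. exists m, (1 - m - c). intros x Hx.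
    rewrite Ha by lra. ring.
  - intros p Hp. destruct (pl_right Hf (1 - p) ltac:(lra)) as (e & He & Hle & m & c & Ha).
    exists e. split; [lra|]. split; [lra|]. exists m, (1 - m - c). intros x Hx.
    rewrite Ha by lra. ring.
Qed.

Lemma inverse01_flip f fi : inverse01 f fi -> inverse01 (flip f) (flip fi).
Proof.
  intros H x Hx. unfold flip. destruct (H (1 - x) ltac:(lra)) as (A & B & C & D).
  replace (1 - (1 - fi (1 - x))) with (fi (1 - x)) by ring.
  replace (1 - (1 - f (1 - x))) with (f (1 - x)) by ring.
  rewrite C, D. repeat split; lra.
Qed.

Lemma commute01_flip g h : commute01 g h -> commute01 (flip g) (flip h).
Proof.
  intros H x Hx. unfold flip.
  replace (1 - (1 - h (1 - x))) with (h (1 - x)) by ring.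
  replace (1 - (1 - g (1 - x))) with (g (1 - x)) by ring.
  rewrite H by lra. reflexivity.
Qed.

Lemma orbital_ends_flip f c0 c1 : orbital_ends f c0 c1 -> orbital_ends (flip f) (1 - c1) (1 - c0).
Proof.
  intros [Hlt H0 H1 F0 F1 Hm]. unfold flip. split; try lra.
  - replace (1 - (1 - c1)) with c1 by ring. lra.
  - replace (1 - (1 - c0)) with c0 by ring. lra.
  - intros x Hx E. apply (Hm (1 - x)); lra.
Qed.

(** * Orbitals *)

Lemma affine_on_moves f u v p : affine_on f u v -> u <= p <= v -> f p <> p ->
  exists eta, 0 < eta /\ forall x, u <= x <= v -> p - eta <= x <= p + eta -> f x <> x.
Proof.
  intros Ha Hp Hne. set (D := Rabs (f p - p)).
  assert (HD : 0 < D) by (apply Rabs_pos_lt, Rminus_eq_contra, Hne).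
  destruct (affine_on_cont f u v p (D / 2) Ha Hp ltac:(lra)) as (eta & Heta & Hc).
  exists (Rmin eta (D / 2)). pose proof (Rmin_l eta (D / 2)). pose proof (Rmin_r eta (D / 2)).
  split; [apply Rmin_glb_lt; lra|].
  intros x Hx Hxp E. specialize (Hc x Hx ltac:(lra)). rewrite E in Hc. unfold D in *.
  destruct (Rcase_abs (f p - p)); [rewrite Rabs_left in * | rewrite Rabs_right in *]; lra.
Qed.

Lemma affine_on_two_fixed_points f u v p1 p2 : affine_on f u v ->
  u <= p1 < p2 -> p2 <= v -> f p1 = p1 -> f p2 = p2 -> forall x, u <= x <= v -> f x = x.
Proof.
  intros (m & c & Hf) Hp1 Hp2 F1 F2 x Hx.
  rewrite Hf in F1, F2 by lra. rewrite Hf by lra.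
  assert (Hm : (m - 1) * (p2 - p1) = 0) by lra.
  apply Rmult_integral in Hm as [Hm|Hm]; [|lra].
  replace m with 1 in * by lra. lra.
Qed.

Lemma fixed_point_below g e : pl_homeo g -> 0 <= e <= 1 -> g e <> e ->
  exists c0, 0 <= c0 < e /\ g c0 = c0 /\ forall x, c0 < x <= e -> g x <> x.
Proof.
  intros Hg He Hne.
  set (Fix := fun x => 0 <= x <= e /\ g x = x).
  assert (F0 : Fix 0) by (split; [lra | apply (pl_fix0 Hg)]).
  destruct (completeness Fix) as (c & Hub & Hlub).
  { exists e. intros x [Hx _]. lra. }
  { exists 0. exact F0. }
  assert (Hc0 : 0 <= c) by (apply Hub, F0).
  assert (Hce : c <= e) by (apply Hlub; intros x [Hx _]; lra).
  assert (Hfix : g c = c).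
  { destruct (Req_dec c 0) as [->|Hc]; [apply (pl_fix0 Hg)|].
    apply NNPP; intro Hgc.
    destruct (pl_left Hg c ltac:(lra)) as (e' & He' & Hle & Ha).
    destruct (affine_on_moves g (c - e') c c Ha ltac:(lra) Hgc) as (eta & Heta & Hm).
    pose proof (Rmin_l e' eta). pose proof (Rmin_r e' eta).
    assert (c <= c - Rmin e' eta); [|pose proof (Rmin_glb_lt e' eta 0 He' Heta); lra].
    apply Hlub. intros x [Hx Ex]. destruct (Rle_lt_dec x (c - Rmin e' eta)) as [|Hlt]; auto.
    assert (x <= c) by (apply Hub; split; auto).
    exfalso. apply (Hm x); auto; lra. }
  exists c. split; [split; [lra|] | split; [exact Hfix|]].
  - destruct (Req_dec c e) as [->|]; [contradiction|lra].
  - intros x Hx Ex. assert (x <= c) by (apply Hub; split; [lra | exact Ex]). lra.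
Qed.

Lemma exists_orbital_ends g e : pl_homeo g -> 0 <= e <= 1 -> g e <> e ->
  exists c0 c1, orbital_ends g c0 c1 /\ c0 < e < c1.
Proof.
  intros Hg He Hne.
  destruct (fixed_point_below g e Hg He Hne) as (c0 & Hc0 & F0 & M0).
  destruct (fixed_point_below (flip g) (1 - e) (pl_homeo_flip g Hg) ltac:(lra))
    as (d & Hd & Fd & Md).
  { unfold flip. replace (1 - (1 - e)) with e by ring. lra. }
  unfold flip in Fd, Md.
  exists c0, (1 - d). split; [split; try lra|lra].
  intros x Hx. destruct (Rle_lt_dec x e).
  - apply M0; lra.
  - specialize (Md (1 - x) ltac:(lra)). replace (1 - (1 - x)) with x in Md by ring. lra.
Qed.

Lemma glb_exists (S : R -> Prop) a x0 : S x0 -> (forall x, S x -> a <= x) ->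
  exists s, a <= s /\ (forall x, S x -> s <= x) /\ (forall t, s < t -> exists x, S x /\ x < t).
Proof.
  intros Sx0 Ha.
  destruct (completeness (fun y => forall x, S x -> y <= x)) as (s & Hub & Hlub).
  { exists x0. intros y Hy. apply Hy, Sx0. }
  { exists a. exact Ha. }
  assert (Hinf : forall x, S x -> s <= x) by (intros x Sx; apply Hlub; intros y Hy; auto).
  exists s. split; [apply Hub, Ha|]. split; [exact Hinf|].
  intros t Ht. apply NNPP. intro Hno.
  assert (t <= s); [|lra]. apply Hub. intros x Sx.
  destruct (Rle_lt_dec t x); auto. exfalso. apply Hno. eauto.
Qed.

Lemma orbital_moves_left g gi c0 c1 s : pl_homeo g -> inverse01 g gi -> orbital_ends g c0 c1 ->
  c0 < s < c1 -> g s < s \/ gi s < s.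
Proof.
  intros Hg Hi O Hs. pose proof (oe_ge0 O). pose proof (oe_le1 O).
  destruct (Rlt_le_dec (g s) s) as [|Hle]; [left; auto | right].
  pose proof (oe_moves O s Hs). destruct (Hi s ltac:(lra)) as (_ & Hr & _ & E).
  destruct (Rlt_le_dec (gi s) s) as [|Hle']; auto.
  assert (g s <= g (gi s)) by (apply incr01_le; auto using pl_incr; lra). lra.
Qed.

Lemma invariant_set_near_left_end g gi c0 c1 (P : R -> Prop) :
  pl_homeo g -> pl_homeo gi -> inverse01 g gi -> orbital_ends g c0 c1 ->
  (forall x, c0 < x < c1 -> P x -> P (g x) /\ P (gi x)) ->
  (exists x, c0 < x < c1 /\ P x) ->
  forall d, 0 < d -> exists x, c0 < x < c0 + d /\ P x.
Proof.
  intros Hg Hgi Hi O HP (x0 & Hx0 & Px0) d Hd.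
  pose proof O as [Hlt H0 H1 F0 F1 _].
  apply NNPP. intro Hnone.
  set (S := fun x => c0 < x < c1 /\ P x).
  destruct (glb_exists S (c0 + d) x0) as (s & Hs & Hinf & Happrox).
  { split; auto. }
  { intros x [Hx Px]. destruct (Rle_lt_dec (c0 + d) x); auto.
    exfalso. apply Hnone. exists x. split; [lra | exact Px]. }
  assert (Hsc1 : s < c1) by (pose proof (Hinf x0 (conj Hx0 Px0)); lra).
  assert (Hphi : exists phi, pl_homeo phi /\ phi c0 = c0 /\ phi s < s /\
                   forall x, S x -> P (phi x)).
  { destruct (orbital_moves_left g gi c0 c1 s Hg Hi O ltac:(lra)) as [Hgs|Hgis].
    - exists g. split; [exact Hg|]. split; [exact F0|]. split; [exact Hgs|].
      intros x [Hx Px]. apply (HP x Hx Px).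
    - exists gi. split; [exact Hgi|]. split; [|split; [exact Hgis|]].
      + destruct (Hi c0 ltac:(lra)) as (_ & _ & E & _). rewrite F0 in E. exact E.
      + intros x [Hx Px]. apply (HP x Hx Px). }
  destruct Hphi as (phi & Hphi & Fphi & Hps & HPphi).
  (* phi pushes the points of S just above s below s *)
  destruct (affine_right_cont phi s (s - phi s) (pl_right Hphi s ltac:(lra)) ltac:(lra))
    as (eta & Heta & Hle & Hc).
  destruct (Happrox (s + eta) ltac:(lra)) as (x & Sx & Hx).
  pose proof (Hinf x Sx) as Hsx. pose proof (HPphi x Sx) as Px'.
  destruct Sx as [Hx' _]. specialize (Hc x ltac:(lra)).
  assert (c0 < phi x) by (rewrite <- Fphi; apply (pl_incr Hphi); lra).
  assert (s <= phi x) by (apply Hinf; split; [lra | exact Px']). lra.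
Qed.

(** * Commuting elements *)

Lemma commute01_sym g h : commute01 g h -> commute01 h g.
Proof. intros H x Hx. symmetry. auto. Qed.

Lemma commute01_inverse g gi h : inverse01 g gi -> pl_homeo h -> commute01 g h -> commute01 gi h.
Proof.
  intros Hi Hh Hc x Hx. destruct (Hi x Hx) as (_ & Hr & _ & E).
  destruct (Hi (h (gi x)) (pl_homeo_range h _ Hh Hr)) as (_ & _ & E' & _).
  rewrite <- E at 1. rewrite <- Hc by exact Hr. exact E'.
Qed.

Lemma commuting_fixes_all_or_none g gi h c0 c1 p q :
  pl_homeo g -> pl_homeo gi -> pl_homeo h -> inverse01 g gi -> commute01 g h ->
  orbital_ends g c0 c1 -> c0 < p < c1 -> h p = p -> c0 < q < c1 -> h q <> q -> False.
Proof.
  intros Hg Hgi Hh Hi Hc O Hp Fp Hq Mq.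
  pose proof O as [Hlt H0 H1 _ _ _].
  assert (Hfix : forall phi x, commute01 phi h -> c0 < x < c1 -> h x = x -> h (phi x) = phi x).
  { intros phi x Hphi Hx E. rewrite <- Hphi by lra. rewrite E. reflexivity. }
  assert (Hmoved : forall phi x, pl_homeo phi -> commute01 phi h -> c0 < x < c1 ->
                     h x <> x -> h (phi x) <> phi x).
  { intros phi x Hphi Hc' Hx M E. rewrite <- Hc' in E by lra. apply M.
    apply (incr01_inj phi); auto using pl_incr; [apply pl_homeo_range; auto|]; lra. }
  pose proof (commute01_inverse g gi h Hi Hh Hc) as Hci.
  pose proof (invariant_set_near_left_end g gi c0 c1 (fun x => h x = x) Hg Hgi Hi O
                (fun x Hx Px => conj (Hfix g x Hc Hx Px) (Hfix gi x Hci Hx Px))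
                (ex_intro _ p (conj Hp Fp))) as Hfixes.
  pose proof (invariant_set_near_left_end g gi c0 c1 (fun x => h x <> x) Hg Hgi Hi O
                (fun x Hx Px => conj (Hmoved g x Hg Hc Hx Px) (Hmoved gi x Hgi Hci Hx Px))
                (ex_intro _ q (conj Hq Mq))) as Hmoves.
  destruct (pl_right Hh c0 ltac:(lra)) as (e & He & Hle & Ha).
  destruct (Hfixes e He) as (p1 & Hp1 & F1).
  destruct (Hfixes (p1 - c0) ltac:(lra)) as (p2 & Hp2 & F2).
  destruct (Hmoves e He) as (x & Hx & Mx).
  apply Mx. apply (affine_on_two_fixed_points h c0 (c0 + e) p2 p1); auto; lra.
Qed.

Lemma commuting_orbitals_left_end g gi h hi c0 c1 u0 u1 :
  pl_homeo g -> pl_homeo gi -> pl_homeo h -> pl_homeo hi ->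
  inverse01 g gi -> inverse01 h hi -> commute01 g h ->
  orbital_ends g c0 c1 -> orbital_ends h u0 u1 ->
  (exists x, c0 < x < c1 /\ u0 < x < u1) -> c0 = u0.
Proof.
  intros Hg Hgi Hh Hhi Ig Ih Hc Og Oh (x & Hxc & Hxu).
  destruct (Rtotal_order c0 u0) as [Hlt|[Heq|Hgt]]; auto; exfalso.
  - apply (commuting_fixes_all_or_none g gi h c0 c1 u0 x); auto; [lra | apply (oe_fix0 Oh)|].
    apply (oe_moves Oh); lra.
  - apply (commuting_fixes_all_or_none h hi g u0 u1 c0 x); auto using commute01_sym;
      [lra | apply (oe_fix0 Og)|].
    apply (oe_moves Og); lra.
Qed.

Lemma commuting_orbitals_eq g gi h hi c0 c1 u0 u1 :
  pl_homeo g -> pl_homeo gi -> pl_homeo h -> pl_homeo hi ->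
  inverse01 g gi -> inverse01 h hi -> commute01 g h ->
  orbital_ends g c0 c1 -> orbital_ends h u0 u1 ->
  (exists x, c0 < x < c1 /\ u0 < x < u1) -> c0 = u0 /\ c1 = u1.
Proof.
  intros Hg Hgi Hh Hhi Ig Ih Hc Og Oh (x & Hx).
  split; [apply (commuting_orbitals_left_end g gi h hi c0 c1 u0 u1); eauto|].
  enough (1 - c1 = 1 - u1) by lra.
  apply (commuting_orbitals_left_end (flip g) (flip gi) (flip h) (flip hi)
           (1 - c1) (1 - c0) (1 - u1) (1 - u0));
    auto using pl_homeo_flip, inverse01_flip, commute01_flip, orbital_ends_flip.
  exists (1 - x). lra.
Qed.

(** * The two relators *)

Lemma commute01_of_comm_id a ai b bi : inverse01 a ai -> inverse01 b bi ->
  is_id (pcomm a ai b bi) -> commute01 b a.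
Proof.
  intros Ia Ib H x Hx. specialize (H x Hx). unfold pcomm, pmul in H.
  destruct (Ia x Hx) as (A1 & _ & _ & _). destruct (Ib (a x) A1) as (B1 & _ & _ & _).
  destruct (Ia (b (a x)) B1) as (_ & C2 & _ & C4).
  destruct (Ib (ai (b (a x))) C2) as (_ & _ & _ & D4).
  rewrite H in D4. rewrite <- D4 in C4. exact (eq_sym C4).
Qed.

Lemma pl_homeo_conj f k ki : pl_homeo f -> pl_homeo k -> inverse01 k ki ->
  pl_homeo (pconj f k ki).
Proof.
  intros Hf Hk Hi. apply pl_homeo_comp; auto.
  apply pl_homeo_comp; auto. exact (pl_homeo_inverse k ki Hk Hi).
Qed.

Lemma inverse01_conj f fi k ki : inverse01 f fi -> inverse01 k ki ->
  inverse01 (pconj f k ki) (pconj fi k ki).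
Proof.
  intros Hf Hk. exact (inverse01_comp _ _ k ki (inverse01_comp ki k f fi (inverse01_sym _ _ Hk) Hf) Hk).
Qed.

Lemma orbital_ends_conj f k ki b0 b1 : pl_homeo f -> pl_homeo k -> inverse01 k ki ->
  orbital_ends f b0 b1 -> orbital_ends (pconj f k ki) (k b0) (k b1).
Proof.
  intros Hf Hk Hi [Hlt H0 H1 F0 F1 M]. unfold pconj, pmul.
  pose proof (pl_homeo_inverse k ki Hk Hi) as Hki.
  destruct (Hi b0 ltac:(lra)) as (R0 & _ & K0 & _). destruct (Hi b1 ltac:(lra)) as (R1 & _ & K1 & _).
  split; try lra.
  - apply (pl_incr Hk); lra.
  - rewrite K0, F0. reflexivity.
  - rewrite K1, F1. reflexivity.
  - intros x Hx E. destruct (Hi x ltac:(lra)) as (_ & X1 & _ & X4).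
    assert (b0 < ki x) by (rewrite <- K0; apply (pl_incr Hki); lra).
    assert (ki x < b1) by (rewrite <- K1; apply (pl_incr Hki); lra).
    apply (M (ki x)); [lra|].
    apply (incr01_inj k); auto using pl_incr; [apply pl_homeo_range; auto; lra|].
    rewrite E, X4. reflexivity.
Qed.

Lemma conj_orbital_at_fixed_point g gi f fi k ki c0 c1 b0 b1 e :
  pl_homeo g -> pl_homeo gi -> inverse01 g gi ->
  pl_homeo f -> inverse01 f fi -> pl_homeo k -> inverse01 k ki ->
  commute01 g (pconj f k ki) -> orbital_ends g c0 c1 -> orbital_ends f b0 b1 ->
  c0 < e < c1 -> b0 < e < b1 -> k e = e -> c0 = k b0 /\ c1 = k b1.
Proof.
  intros Hg Hgi Ig Hf If Hk Ik Hc Og Of He Hb Fe.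
  pose proof Of as [_ H0 H1 _ _ _].
  apply (commuting_orbitals_eq g gi (pconj f k ki) (pconj fi k ki)); auto.
  - apply pl_homeo_conj; auto.
  - apply pl_homeo_conj; auto. exact (pl_homeo_inverse f fi Hf If).
  - apply inverse01_conj; auto.
  - apply orbital_ends_conj; auto.
  - exists e. split; [lra|]. rewrite <- Fe. split; apply (pl_incr Hk); lra.
Qed.

Section TwoRelators.

Variables f0 g0 f1 g1 : R -> R.
Hypotheses (Hf0 : pl_homeo f0) (Hf1 : pl_homeo f1).
Hypotheses (Hi0 : inverse01 f0 g0) (Hi1 : inverse01 f1 g1).
Hypothesis Hc1 : commute01 (pmul f0 g1) (pconj f1 f0 g0).
Hypothesis Hc2 : commute01 (pmul f0 g1) (pconj f1 (pmul f0 f0) (pmul g0 g0)).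

Lemma fixed_point_in_orbital_fixes_ends b0 b1 e : orbital_ends f1 b0 b1 ->
  b0 < e < b1 -> f0 e = e -> f0 b0 = b0 /\ f0 b1 = b1.
Proof.
  intros Ob Hb Fe. pose proof Ob as [_ H0 H1 _ _ M].
  pose proof (pl_homeo_inverse f0 g0 Hf0 Hi0) as Hg0.
  pose proof (pl_homeo_inverse f1 g1 Hf1 Hi1) as Hg1.
  assert (Ig : inverse01 (pmul f0 g1) (pmul f1 g0))
    by exact (inverse01_comp f0 g0 g1 f1 Hi0 (inverse01_sym _ _ Hi1)).
  assert (Hg : pl_homeo (pmul f0 g1)) by (apply pl_homeo_comp; auto).
  assert (Hgi : pl_homeo (pmul f1 g0)) by (apply pl_homeo_comp; auto).
  assert (Hge : pmul f0 g1 e <> e).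
  { unfold pmul. rewrite Fe. intro E. apply (M e Hb).
    destruct (Hi1 e ltac:(lra)) as (_ & _ & _ & E'). rewrite E in E'. exact E'. }
  destruct (exists_orbital_ends _ e Hg ltac:(lra) Hge) as (c0 & c1 & Oc & Hc).
  destruct (conj_orbital_at_fixed_point _ _ f1 g1 f0 g0 c0 c1 b0 b1 e
              Hg Hgi Ig Hf1 Hi1 Hf0 Hi0 Hc1 Oc Ob Hc Hb Fe) as [E1 E2].
  destruct (conj_orbital_at_fixed_point _ _ f1 g1 (pmul f0 f0) (pmul g0 g0) c0 c1 b0 b1 e
              Hg Hgi Ig Hf1 Hi1 (pl_homeo_comp f0 f0 Hf0 Hf0) (inverse01_comp _ _ _ _ Hi0 Hi0)
              Hc2 Oc Ob Hc Hb ltac:(unfold pmul; rewrite !Fe; reflexivity)) as [E3 E4].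
  unfold pmul in E3, E4.
  split; apply (incr01_inj f0); auto using pl_incr; try (apply pl_homeo_range; auto); lra.
Qed.

Lemma orbital_ends_nested a0 a1 b0 b1 : orbital_ends f0 a0 a1 -> orbital_ends f1 b0 b1 ->
  (exists x, a0 < x < a1 /\ b0 < x < b1) ->
  (b0 <= a0 /\ a1 <= b1) \/ (a0 <= b0 /\ b1 <= a1).
Proof.
  intros Oa Ob (x & Hxa & Hxb). pose proof Oa as [_ _ _ Fa0 Fa1 Ma].
  destruct (Rle_lt_dec b0 a0) as [H0|H0]; destruct (Rle_lt_dec a1 b1) as [H1|H1].
  - left. lra.
  - destruct (Req_dec b0 a0) as [|Hne]; [right; lra | exfalso].
    destruct (fixed_point_in_orbital_fixes_ends b0 b1 a0 Ob ltac:(lra) Fa0) as [_ E].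
    apply (Ma b1); [lra | exact E].
  - destruct (Req_dec a1 b1) as [|Hne]; [right; lra | exfalso].
    destruct (fixed_point_in_orbital_fixes_ends b0 b1 a1 Ob ltac:(lra) Fa1) as [E _].
    apply (Ma b0); [lra | exact E].
  - right. lra.
Qed.

End TwoRelators.

Lemma orbital_ends_of_orbital f A : orbital f A ->
  exists a0 a1, orbital_ends f a0 a1 /\ forall x, A x <-> a0 < x < a1.
Proof.
  intros (a0 & a1 & Hlt & H0 & H1 & HA & Hs & N0 & N1). exists a0, a1. split; [|exact HA].
  split; auto.
  - apply NNPP. intro E. apply N0. split; [lra | exact E].
  - apply NNPP. intro E. apply N1. split; [lra | exact E].
  - intros x Hx. apply Hs, Hx.
Qed.

Theorem lemma2p3 (f0 g0 f1 g1 : R -> R) :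
  PL0 f0 -> PL0 f1 -> is_inv f0 g0 -> is_inv f1 g1 ->
  (* [f1^{f0}, f0 f1^{-1}] = 1 *)
  is_id (pcomm (pconj f1 f0 g0) (pconj g1 f0 g0) (pmul f0 g1) (pmul f1 g0)) ->
  (* [f0 f1^{-1}, f1^{f0^2}] = 1 *)
  is_id (pcomm (pmul f0 g1) (pmul f1 g0)
               (pconj f1 (pmul f0 f0) (pmul g0 g0))
               (pconj g1 (pmul f0 f0) (pmul g0 g0))) ->
  forall A B : R -> Prop, orbital f0 A -> orbital f1 B ->
  (exists x, A x /\ B x) ->
  (forall x, A x -> B x) \/ (forall x, B x -> A x).
Proof.
  intros HP0 HP1 Hinv0 Hinv1 Hc1 Hc2 A B HA HB (x & Ax & Bx).
  pose proof (PL0_pl_homeo f0 HP0) as Hf0. pose proof (PL0_pl_homeo f1 HP1) as Hf1.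
  pose proof (is_inv_inverse01 f0 g0 HP0 Hinv0) as Hi0.
  pose proof (is_inv_inverse01 f1 g1 HP1 Hinv1) as Hi1.
  pose proof (inverse01_comp f0 g0 g1 f1 Hi0 (inverse01_sym _ _ Hi1)) as Ig.
  pose proof (commute01_of_comm_id _ _ _ _ (inverse01_conj f1 g1 f0 g0 Hi1 Hi0) Ig Hc1) as C1.
  pose proof (commute01_of_comm_id _ _ _ _ Ig
                (inverse01_conj f1 g1 _ _ Hi1 (inverse01_comp _ _ _ _ Hi0 Hi0)) Hc2) as C2.
  destruct (orbital_ends_of_orbital f0 A HA) as (a0 & a1 & Oa & EA).
  destruct (orbital_ends_of_orbital f1 B HB) as (b0 & b1 & Ob & EB).
  destruct (orbital_ends_nested f0 g0 f1 g1 Hf0 Hf1 Hi0 Hi1 C1 (commute01_sym _ _ C2)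
              a0 a1 b0 b1 Oa Ob (ex_intro _ x (conj (proj1 (EA x) Ax) (proj1 (EB x) Bx))))
    as [Hsub|Hsub]; [left | right]; intros y Hy.
  - apply EB. apply EA in Hy. lra.
  - apply EA. apply EB in Hy. lra.
Qed.
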